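(* Let $\mathcal V$ be a finite set, $2\le k\le|\mathcal V|-2$, let $\Gamma\subset\binom{\mathcal V}{k}$ be a code, and suppose that $\Gamma$ is $G$-strongly incidence-transitive with $G\le{\rm Aut}(\Gamma)\cap{\rm Sym}(\mathcal V)$. Let $\gamma\in\Gamma$, and suppose that $G_\gamma<H<G$ with $H$ transitive on $\mathcal V$ and leaving invariant a non-trivial partition $\Pi$ of $\mathcal V$. Then $\gamma$ is a union of some of the blocks of $\Pi$.
   Context: A code is a proper non-empty subset of $\binom{\mathcal V}{k}$, the $k$-subsets of $\mathcal V$ (vertices of the Johnson graph, adjacent iff meeting in $k-1$ points); ${\rm Aut}(\Gamma)$ is its setwise stabiliser in the automorphism group of the Johnson graph. $\Gamma$ is $G$-strongly incidence-transitive if $G$ is transitive on $\Gamma$ and, for $\gamma\in\Gamma$, $G_\gamma$ is transitive on $\gamma\times(\mathcal V\setminus\gamma)$. *)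

From mathcomp Require Import all_boot all_fingroup.
Set Implicit Arguments. Unset Strict Implicit. Unset Printing Implicit Defensive.
Local Open Scope group_scope.

Section Defs.
Variable V : finType.

Definition pimg (g : {perm V}) (A : {set V}) : {set V} := [set g x | x in A].

Definition is_code (k : nat) (Gamma : {set {set V}}) : Prop :=
  Gamma != set0 /\ Gamma \proper [set A : {set V} | #|A| == k].

(* G <= Aut(Gamma) ∩ Sym(V): elements of G (permutations of V) fix Gamma setwise *)
Definition preserves (G : {set {perm V}}) (Gamma : {set {set V}}) : Prop :=
  forall g, g \in G -> [set pimg g A | A in Gamma] = Gamma.

Definition setstab (G : {set {perm V}}) (gamma : {set V}) : {set {perm V}} :=
  [set g in G | pimg g gamma == gamma].

Definition strongly_incidence_transitive (G : {set {perm V}})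
    (Gamma : {set {set V}}) : Prop :=
  (forall A B, A \in Gamma -> B \in Gamma -> exists2 g, g \in G & pimg g A = B) /\
  (forall gamma, gamma \in Gamma ->
     forall a b a' b', a \in gamma -> b \notin gamma -> a' \in gamma -> b' \notin gamma ->
     exists2 g, g \in setstab G gamma & (g a = a' /\ g b = b')).

Definition transitive_on_V (H : {set {perm V}}) : Prop :=
  forall x y : V, exists2 h, h \in H & h x = y.

Definition nontrivial_partition (P : {set {set V}}) : Prop :=
  partition P [set: V] /\ P != [set [set x] | x : V] /\ P != [set [set: V]].

Definition leaves_invariant (H : {set {perm V}}) (P : {set {set V}}) : Prop :=
  forall h B, h \in H -> B \in P -> pimg h B \in P.
End Defs.

From mathcomp Require Import all_boot all_fingroup.

Set Implicit Arguments.
Unset Strict Implicit.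
Unset Printing Implicit Defensive.

(* If some block of Pi met both gamma and its complement, say in a in gamma and
   b outside, then since G_gamma <= H maps (a, b) to any such pair (a', b') and
   H permutes the blocks, every point of gamma would share a block with every
   point outside gamma; as both are non-empty, Pi would have a single block.
   Hence every block lies inside gamma or outside it. *)

Lemma crossing_eq_const (V T : Type) (A : {pred V}) (f : V -> T) a b :
    a \in A -> b \notin A ->
    (forall a' b', a' \in A -> b' \notin A -> f a' = f b') ->
  forall x, f x = f a.
Proof.
move=> aA bA cross x; have [xA | xA] := boolP (x \in A).
  by rewrite (cross x b xA bA) (cross a b aA bA).
by rewrite (cross a x aA xA).
Qed.

Section BlocksOfPartition.

Variables (V : finType) (P : {set {set V}}).
Hypothesis partP : partition P [set: V].

Let tiP : trivIset P. Proof. by case/and3P: partP. Qed.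

Let pblock_memP x : pblock P x \in P.
Proof. by apply: pblock_mem; rewrite (cover_partition partP) inE. Qed.

Let mem_pblockP x : x \in pblock P x.
Proof. by rewrite mem_pblock (cover_partition partP) inE. Qed.

Lemma pblock_perm_invariant (h : {perm V}) x y :
    (forall B, B \in P -> pimg h B \in P) ->
  pblock P x = pblock P y -> pblock P (h x) = pblock P (h y).
Proof.
move=> invP exy; have hB := invP _ (pblock_memP x).
have hxB : h x \in pimg h (pblock P x) by apply: imset_f.
have hyB : h y \in pimg h (pblock P x) by rewrite exy; apply: imset_f.
by rewrite (def_pblock tiP hB hxB) (def_pblock tiP hB hyB).
Qed.

Lemma partition_one_block (a : V) :
  (forall x, pblock P x = pblock P a) -> P = [set [set: V]].
Proof.
move=> const; have blockT : pblock P a = [set: V].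
  by apply/setP=> x; rewrite inE -(const x) mem_pblockP.
apply/setP=> B; rewrite inE -blockT.
apply/idP/eqP=> [BP | ->]; last exact: pblock_memP.
have [x xB] : exists x, x \in B.
  by apply/set0Pn; apply: contraNneq _ (negbT (partition0 partP)) => <-.
by rewrite -(const x) (def_pblock tiP BP xB).
Qed.

Lemma cover_blocks_sub (A : {set V}) :
    (forall x y, x \in A -> y \notin A -> pblock P x != pblock P y) ->
  A = cover [set B in P | B \subset A].
Proof.
move=> sep; apply/setP=> x; apply/idP/bigcupP=> [xA | [B]]; last first.
  by rewrite inE => /andP[_ /subsetP]; apply.
exists (pblock P x) => //; rewrite inE pblock_memP; apply/subsetP=> y yx.
apply: contraNT (sep x y xA) _.
by rewrite negbK (def_pblock tiP (pblock_memP x) yx).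
Qed.

End BlocksOfPartition.

Theorem lemma5p2 (V : finType) (k : nat) (Gamma : {set {set V}})
    (G H : {group {perm V}}) (gamma : {set V}) (P : {set {set V}}) :
  2 <= k -> k <= #|V| - 2 ->
  is_code k Gamma ->
  preserves G Gamma ->
  strongly_incidence_transitive G Gamma ->
  gamma \in Gamma ->
  setstab G gamma \proper H -> H \proper G ->
  transitive_on_V H ->
  nontrivial_partition P ->
  leaves_invariant H P ->
  exists2 S : {set {set V}}, S \subset P & gamma = cover S.
Proof.
move=> _ _ _ _ [_ sit] gammaG sGH _ _ [partP [_ notOneBlock]] invH.
exists [set B in P | B \subset gamma]; first by apply/subsetP=> B /setIdP[].
apply: (cover_blocks_sub partP) => a b ag bg; apply/eqP=> eab.
have cross a' b' : a' \in gamma -> b' \notin gamma -> pblock P a' = pblock P b'.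
  move=> a'g b'g; have [g gS [<- <-]] := sit gamma gammaG a b a' b' ag bg a'g b'g.
  apply: pblock_perm_invariant => // B; apply: invH.
  exact: subsetP (proper_sub sGH) g gS.
have const := crossing_eq_const ag bg cross.
by rewrite (partition_one_block partP const) eqxx in notOneBlock.
Qed.
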